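(* Let $L$ be a finite lattice and $C$ a nonempty convex subset of $L$. Then every maximal chain of $L$ that does not intersect $C$ contains an element that is neither below all maximal elements of $C$ nor above all minimal elements of $C$.
   Context: A subset $C$ of $L$ is convex if $x,y\in C$ implies $[x,y]\subseteq C$. A maximal chain is a totally ordered subset to which no element can be added while remaining a chain. *)

From HB Require Import structures.
From mathcomp Require Import all_boot all_order.
Set Implicit Arguments. Unset Strict Implicit. Unset Printing Implicit Defensive.
Import Order.TTheory.
Local Open Scope order_scope.

Definition convex {d} {L : finLatticeType d} (C : {set L}) : Prop :=
  forall x y z : L, x \in C -> y \in C -> x <= z -> z <= y -> z \in C.

Definition is_chain {d} {L : finLatticeType d} (M : {set L}) : Prop :=
  forall x y : L, x \in M -> y \in M -> (x <= y) || (y <= x).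

Definition maximal_chain {d} {L : finLatticeType d} (M : {set L}) : Prop :=
  is_chain M /\ forall z : L, z \notin M -> ~ is_chain (z |: M).

Definition maximal_elt {d} {L : finLatticeType d} (C : {set L}) (m : L) : Prop :=
  m \in C /\ forall y : L, y \in C -> ~ (m < y).

Definition minimal_elt {d} {L : finLatticeType d} (C : {set L}) (m : L) : Prop :=
  m \in C /\ forall y : L, y \in C -> ~ (y < m).

(* Pick top maximal in C and bot <= top minimal in C.  If the theorem failed,
   every element of the maximal chain M would lie below top or above bot.  Let
   z be minimal among the elements of [bot, top] that dominate the part of M
   below top.  The elements of M not below top lie above bot and above that
   part, so meeting them with z stays in the same set and minimality gives
   z <= x.  Hence z is comparable with all of M; by convexity z is in C, hence
   not in M, contradicting the maximality of M. *)

From HB Require Import structures.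
From mathcomp Require Import all_boot all_order.
Import Order.TTheory.
Set Implicit Arguments. Unset Strict Implicit.
Local Open Scope order_scope.

Section FiniteLattice.
Variables (d : Order.disp_t) (L : finLatticeType d).
Implicit Types (C M : {set L}) (x y z : L).

Lemma minimal_elt_exists C : C != set0 -> exists m, minimal_elt C m.
Proof.
case/set0Pn=> c cC.
pose below x := #|[set y in C | y < x]|.
have [m mC mmin] := arg_minnP below cC; exists m; split=> // y yC ltym.
have: (below y < below m)%N.
  apply: proper_card; apply/properP; split.
    by apply/subsetP=> w; rewrite !inE => /andP[-> /lt_trans->].
  by exists y; rewrite !inE ?yC ?ltym ?ltxx.
by rewrite ltnNge mmin.
Qed.

Lemma minimal_elt_below C c :
  c \in C -> exists2 m, minimal_elt C m & m <= c.
Proof.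
move=> cC; have /minimal_elt_exists[m [] ] : [set y in C | y <= c] != set0.
  by apply/set0Pn; exists c; rewrite inE cC lexx.
rewrite inE => /andP[mC mc] mmin; exists m => //; split=> // y yC ltym.
by apply: (mmin y) => //; rewrite inE yC (le_trans (ltW ltym) mc).
Qed.

Lemma is_chain_setU1 M z :
  is_chain M -> {in M, forall x, z >=< x} -> is_chain (z |: M).
Proof.
move=> Mch zM x y; rewrite !inE.
case/predU1P=> [->|xM]; case/predU1P=> [->|yM].
- by rewrite lexx.
- exact: zM.
- by rewrite orbC; apply: zM.
- exact: Mch.
Qed.

Lemma chain_extendable_between M a b :
  is_chain M -> a <= b -> {in M, forall x, (x <= b) || (a <= x)} ->
  exists z, [/\ a <= z, z <= b & is_chain (z |: M)].
Proof.
move=> Mch ab Mab.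
pose Z := [set z | [&& a <= z, z <= b & [forall x in M, (x <= b) ==> (x <= z)]]].
have /minimal_elt_exists[z [] ] : Z != set0.
  apply/set0Pn; exists b; rewrite inE ab lexx /=.
  by apply/forall_inP=> x _; apply/implyP.
rewrite inE => /and3P[az zb /forall_inP zM] zmin.
exists z; split=> //; apply: is_chain_setU1 => // x xM.
have [xb|xNb] := boolP (x <= b).
  by apply: ge_comparable; apply: (implyP (zM x xM)).
have ax : a <= x by move: (Mab x xM); rewrite (negbTE xNb).
have Mx : {in M, forall y, y <= b -> y <= x}.
  move=> y yM yb; case/orP: (Mch y x yM xM) => // xy.
  by rewrite (le_trans xy yb) in xNb.
have zxZ : z `&` x \in Z.
  rewrite inE lexI az ax (le_trans (leIl _ _) zb) /=.
  by apply/forall_inP=> y yM; apply/implyP=> yb; rewrite lexI (implyP (zM y yM)) ?Mx.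
have : ~~ (z `&` x < z) by apply/negP; apply: zmin.
by rewrite lt_def leIl andbT negbK => /eqP/esym/meet_idPl/le_comparable.
Qed.

End FiniteLattice.

Lemma maximal_elt_above d (L : finLatticeType d) (C : {set L}) c :
  c \in C -> exists2 m, maximal_elt C m & c <= m.
Proof.
move=> cC; have [m [mC mmin] mc] := @minimal_elt_below _ L^d C c cC.
by exists m => //; split=> // y yC; apply: mmin.
Qed.

Theorem lemma3p17 (d : Order.disp_t) (L : finLatticeType d) (C : {set L}) :
  C != set0 -> convex C ->
  forall M : {set L}, maximal_chain M -> M :&: C = set0 ->
  exists2 x : L, x \in M &
    (exists m : L, maximal_elt C m /\ ~~ (x <= m)) /\
    (exists m : L, minimal_elt C m /\ ~~ (m <= x)).
Proof.
case/set0Pn=> c cC Cconv M [Mch Mmax] MC.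
have [top topmax ctop] := maximal_elt_above cC.
have [bot botmin botc] := minimal_elt_below cC.
case: (pickP [pred x in M | ~~ (x <= top) && ~~ (bot <= x)]) => [x|noM].
  case/andP=> xM /andP[xNtop botNx]; exists x => //.
  by split; [exists top | exists bot].
have Msplit : {in M, forall x, (x <= top) || (bot <= x)}.
  by move=> x xM; move: (noM x); rewrite /= xM; case: (x <= top); case: (bot <= x).
have [z [botz ztop zMch]] := chain_extendable_between Mch (le_trans botc ctop) Msplit.
have zC : z \in C := Cconv bot top z botmin.1 topmax.1 botz ztop.
have zM : z \notin M.
  by apply/negP=> zM; have := in_set0 z; rewrite -MC inE zM zC.
by case: (Mmax z zM zMch).
Qed.
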